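(* For all $n\ge1$, the number of $2$-element faces of the broken circuit complex of $\mathcal{A}_n$ (with respect to the binary order) is \[ f_1(BC(\mathcal{A}_n))=2S(n+1,3)+3S(n+1,4). \]
   Context: For $n\ge1$, $\mathcal{A}_n$ is the resonance arrangement in $\mathbb{R}^n$ of hyperplanes $H_I=\{x:\sum_{i\in I}x_i=0\}$, $\emptyset\ne I\subseteq[n]$. Binary order: $H_I$ is encoded by $\sum_{j\in I}2^j$ and hyperplanes are linearly ordered by this number. A circuit is a minimally linearly dependent set of hyperplanes (of normal vectors $\chi_I$); a broken circuit is $C\setminus\{H\}$ with $C$ a circuit and $H$ its largest element. The broken circuit complex $BC(\mathcal{A})$ is the simplicial complex of subsets of $\mathcal{A}$ containing no broken circuit, and $f_1$ counts its faces with $2$ elements. $S(n,k)$ denotes the Stirling number of the second kind. *)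

From HB Require Import structures.
From mathcomp Require Import all_boot all_order all_algebra.
From mathcomp Require Import reals.

Set Implicit Arguments. Unset Strict Implicit. Unset Printing Implicit Defensive.
Import Order.TTheory GRing.Theory Num.Theory.
Local Open Scope ring_scope.

(* Ground set [n] is modelled as 'I_n = {0,...,n-1}; the hyperplane H_I is
   represented by the nonempty index set I : {set 'I_n}. *)

Definition hyps (n : nat) : {set {set 'I_n}} := [set I | I != set0].

Definition hcode (n : nat) (I : {set 'I_n}) : nat := (\sum_(j in I) 2 ^ j)%N.

(* normal vector chi_I in R^n *)
Definition chi (R : realType) (n : nat) (I : {set 'I_n}) : 'rV[R]_n :=
  \row_(j < n) (j \in I)%:R.

Definition hdependent (R : realType) (n : nat) (C : {set {set 'I_n}}) : bool :=
  ~~ free [seq chi R X | X <- enum C].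

Definition hcircuit (R : realType) (n : nat) (C : {set {set 'I_n}}) : bool :=
  [&& C \subset hyps n, hdependent R C &
      [forall D : {set {set 'I_n}}, (D \proper C) ==> ~~ hdependent R D]].

Definition hbroken (R : realType) (n : nat) (B : {set {set 'I_n}}) : bool :=
  [exists C : {set {set 'I_n}}, hcircuit R C &&
     [exists H in C, [forall H' in C, (hcode H' <= hcode H)%N] && (B == C :\ H)]].

Definition bc_face (R : realType) (n : nat) (S : {set {set 'I_n}}) : bool :=
  (S \subset hyps n) &&
  [forall B : {set {set 'I_n}}, hbroken R B ==> ~~ (B \subset S)].

Definition f1_BC (R : realType) (n : nat) : nat :=
  #|[set S : {set {set 'I_n}} | bc_face R S && (#|S| == 2)%N]|.

Fixpoint stirling2 (n k : nat) : nat :=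
  match n, k with
  | 0, 0 => 1
  | 0, _.+1 => 0
  | _.+1, 0 => 0
  | m.+1, l.+1 => (l.+1 * stirling2 m l.+1 + stirling2 m l)%N
  end.

From mathcomp Require Import all_boot all_order all_algebra.
From mathcomp Require Import reals.
From mathcomp Require Import lra zify.

Set Implicit Arguments. Unset Strict Implicit. Unset Printing Implicit Defensive.
Import Order.TTheory GRing.Theory Num.Theory.

(* 1. Dependencies among indicator vectors: two distinct nonempty sets are
      independent, and if chi_X = a chi_Y + b chi_Z for distinct nonempty
      X, Y, Z then one of the three sets is the disjoint union of the
      other two.  Hence every circuit has at least three elements and the
      three-element circuits are exactly the triples {A u B, A, B} with
      A, B nonempty and disjoint.
   2. Broken circuits of size 2: in such a circuit A u B has the largest
      binary code, so {A, B} is a broken circuit whenever A and B are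
      disjoint; conversely a broken circuit inside {A, B} forces A and B
      to be disjoint.  So a pair {A, B} is a face iff A and B meet.
   3. Counting: ordered pairs of distinct meeting subsets number
      4^n - 3^n - 2^n + 1, which is twice f_1; the Stirling recurrence
      gives 2 S(m+1,3) = 3^m - 2^(m+1) + 1 and
      6 S(m+1,4) = 4^m - 3^(m+1) + 3 2^m - 1, and the identity follows. *)

Section SmallEnumerations.
Variable T : finType.

Lemma enum_set2 (x y : T) : x != y -> perm_eq (enum [set x; y]) [:: x; y].
Proof.
move=> xy; apply: uniq_perm; rewrite ?enum_uniq //= ?inE ?xy // => z.
by rewrite mem_enum !inE.
Qed.

Lemma enum_set3 (x y z : T) : x != y -> x != z -> y != z ->
  perm_eq (enum [set x; y; z]) [:: x; y; z].
Proof.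
move=> xy xz yz; apply: uniq_perm; rewrite ?enum_uniq //= ?inE ?negb_or ?xy ?xz ?yz //.
move=> w.
by rewrite mem_enum !inE orbA.
Qed.

Lemma card_set3 (x y z : T) : x != y -> x != z -> y != z ->
  #|[set x; y; z]| = 3.
Proof. by move=> xy xz yz; rewrite cardE (perm_size (enum_set3 xy xz yz)). Qed.

Lemma setD1_set3 (x y z : T) : x != y -> x != z -> [set x; y; z] :\ x = [set y; z].
Proof.
move=> xy xz; apply/setP => w; rewrite !inE -orbA.
by case: (eqVneq w x) => [->|] //=; rewrite (negbTE xy) (negbTE xz).
Qed.

End SmallEnumerations.

Section IndicatorRelations.
Variables (T : finType) (R : realFieldType).
Local Open Scope ring_scope.

Definition disjoint_union (X Y Z : {set T}) : bool :=
  [disjoint Y & Z] && (X == Y :|: Z).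

Lemma disjoint_unionC (X Y Z : {set T}) :
  disjoint_union X Y Z = disjoint_union X Z Y.
Proof. by rewrite /disjoint_union disjoint_sym setUC. Qed.

Definition indicator_comb (X Y Z : {set T}) (a b : R) : Prop :=
  forall j, (j \in X)%:R = a * (j \in Y)%:R + b * (j \in Z)%:R.

Lemma indicator_combC (X Y Z : {set T}) (a b : R) :
  indicator_comb X Y Z a b -> indicator_comb X Z Y b a.
Proof. by move=> h j; rewrite h addrC. Qed.

(* Check a relation coordinatewise: at each point the three indicators are
   0 or 1, and the relation rules out all inconsistent patterns. *)
Ltac at_coordinate h j X Y Z :=
  have := h j; case: (j \in X); case: (j \in Y); case: (j \in Z) => /= ? //;
  exfalso; lra.

Lemma comb00 (X Y Z : {set T}) : indicator_comb X Y Z 0 0 -> X = set0.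
Proof. by move=> h; apply/setP => j; rewrite inE; at_coordinate h j X Y Z. Qed.

Lemma comb10 (X Y Z : {set T}) : indicator_comb X Y Z 1 0 -> X = Y.
Proof. by move=> h; apply/setP => j; at_coordinate h j X Y Z. Qed.

Lemma comb11 (X Y Z : {set T}) :
  indicator_comb X Y Z 1 1 -> disjoint_union X Y Z.
Proof.
move=> h; apply/andP; split.
  by apply/pred0P => j /=; at_coordinate h j X Y Z.
by apply/eqP/setP => j; rewrite inE; at_coordinate h j X Y Z.
Qed.

Lemma comb1N1 (X Y Z : {set T}) :
  indicator_comb X Y Z 1 (-1) -> disjoint_union Y X Z.
Proof.
move=> h; apply/andP; split.
  by apply/pred0P => j /=; at_coordinate h j X Y Z.
by apply/eqP/setP => j; rewrite inE; at_coordinate h j X Y Z.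
Qed.

Lemma comb_coef (X Y Z : {set T}) a b j : indicator_comb X Y Z a b ->
  j \in Y -> j \notin Z -> a = (j \in X)%:R.
Proof. by move=> h jY /negbTE jZ; rewrite h jY jZ /=; lra. Qed.

Lemma comb_coef_sum (X Y Z : {set T}) a b j : indicator_comb X Y Z a b ->
  j \in Y -> j \in Z -> a + b = (j \in X)%:R.
Proof. by move=> h jY jZ; rewrite h jY jZ /=; lra. Qed.

Lemma indicator_comb_union (X Y Z : {set T}) a b : indicator_comb X Y Z a b ->
  X != set0 -> Y != set0 -> Z != set0 -> X != Y -> X != Z -> Y != Z ->
  [|| disjoint_union X Y Z, disjoint_union Y X Z | disjoint_union Z X Y].
Proof.
wlog [j jY jZ] : Y Z a b / exists2 j, j \in Y & j \notin Z.
  move=> wlog h hX hY hZ hXY hXZ hYZ.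
  have [YZ|/subsetPn jYZ] := boolP (Y \subset Z).
    2: exact: wlog jYZ h hX hY hZ hXY hXZ hYZ.
  have /subsetPn ZY : ~~ (Z \subset Y).
    by apply: contra hYZ => ZY; rewrite eqEsubset YZ ZY.
  have := wlog Z Y b a ZY (indicator_combC h) hX hZ hY hXZ hXY.
  rewrite eq_sym disjoint_unionC => /(_ hYZ).
  by case/or3P => ->; rewrite ?orbT.
move=> h hX hY hZ hXY hXZ hYZ.
have ha := comb_coef h jY jZ.
(* Either Z has a point outside Y, fixing b, or Z is inside Y, fixing a + b. *)
have [ZY|/subsetPn[k kZ kY]] := boolP (Z \subset Y); last first.
  have hb := comb_coef (indicator_combC h) kZ kY.
  move: h; rewrite {}ha {}hb; case: (j \in X); case: (k \in X) => /= h.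
  - by rewrite comb11.
  - by case/eqP: hXY; apply: comb10 h.
  - by case/eqP: hXZ; apply: comb10 (indicator_combC h).
  - by case/eqP: hX; apply: comb00 h.
have [k kZ] := set0Pn _ hZ.
have := comb_coef_sum h (subsetP ZY k kZ) kZ.
move: ha; case: (j \in X); case: (k \in X) => /= ha hab; rewrite ha in h.
- have hb : b = 0 by lra.
  by rewrite hb in h; case/eqP: hXY; apply: comb10 h.
- have hb : b = -1 by lra.
  by rewrite hb in h; rewrite (comb1N1 h) orbT.
- have hb : b = 1 by lra.
  by rewrite hb in h; case/eqP: hXZ; apply: comb10 (indicator_combC h).
- have hb : b = 0 by lra.
  by rewrite hb in h; case/eqP: hX; apply: comb00 h.
Qed.
End IndicatorRelations.

Section IndicatorVectors.
Variables (R : realType) (n : nat).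
Local Open Scope ring_scope.
Implicit Types (X Y Z A B : {set 'I_n}) (D : {set {set 'I_n}}).

Lemma chi_comb X Y Z (a b : R) : chi R X = a *: chi R Y + b *: chi R Z ->
  indicator_comb X Y Z a b.
Proof. by move=> E j; have := congr1 (fun M : 'rV[R]_n => M 0 j) E; rewrite !mxE. Qed.

Lemma chi_neq0 X : X != set0 -> chi R X != 0.
Proof.
case/set0Pn => j jX; apply/eqP => /(congr1 (fun M : 'rV[R]_n => M 0 j)).
by rewrite !mxE jX /= => /eqP; rewrite oner_eq0.
Qed.

Lemma chi_line X Y (k : R) : X != set0 -> chi R X = k *: chi R Y -> X = Y.
Proof.
case/set0Pn => j jX E.
have h : indicator_comb X Y Y k 0 by apply: chi_comb; rewrite scale0r addr0.
have k1 : k = 1 by have := h j; rewrite jX; case: (j \in Y) => /=; lra.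
by rewrite k1 in h; apply: comb10 h.
Qed.

Lemma independent_set2 X Y : X != set0 -> Y != set0 -> X != Y ->
  ~~ hdependent R [set X; Y].
Proof.
move=> hX hY hXY.
rewrite /hdependent negbK (perm_free (perm_map _ (enum_set2 hXY))).
rewrite /= free_cons seq1_free chi_neq0 // andbT span_seq1.
by apply/vlineP => -[k E]; move/eqP: hXY; apply; apply: chi_line E.
Qed.

Lemma independent_small D : D \subset hyps n -> (#|D| <= 2)%N -> ~~ hdependent R D.
Proof.
move=> /subsetP hD; have hyp X : X \in D -> X != set0 by move/hD; rewrite inE.
rewrite leq_eqVlt ltnS leq_eqVlt ltnS leqn0 => /or3P[/cards2P|/cards1P|/eqP/cards0_eq].
- case=> X [Y [hXY ED]]; rewrite ED in hyp *.
  by rewrite independent_set2 ?hyp ?set21 ?set22.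
- case=> X ED; rewrite ED in hyp *.
  by rewrite /hdependent enum_set1 /= seq1_free negbK chi_neq0 ?hyp ?set11.
- by move=> ->; rewrite /hdependent enum_set0 nil_free.
Qed.

Lemma circuit_card D : hcircuit R D -> (3 <= #|D|)%N.
Proof.
case/and3P => hD hdep _; rewrite leqNgt ltnS; apply: contraL hdep.
exact: independent_small.
Qed.

(* A dependent triple of distinct hyperplanes: the first normal vector is in
   the span of the other two, which are independent. *)
Lemma dependent_set3 X Y Z : X != set0 -> Y != set0 -> Z != set0 ->
  X != Y -> X != Z -> Y != Z -> hdependent R [set X; Y; Z] ->
  exists a b : R, chi R X = a *: chi R Y + b *: chi R Z.
Proof.
move=> hX hY hZ hXY hXZ hYZ.
rewrite /hdependent (perm_free (perm_map _ (enum_set3 hXY hXZ hYZ))) /=.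
have := independent_set2 hY hZ hYZ.
rewrite /hdependent (perm_free (perm_map _ (enum_set2 hYZ))) /= negbK => free_YZ.
rewrite free_cons free_YZ andbT negbK span_cons span_seq1.
by case/memv_addP => _ /vlineP[a ->] [_ /vlineP[b ->] ->]; exists a, b.
Qed.

Lemma chi_setU A B : [disjoint A & B] -> chi R (A :|: B) = chi R A + chi R B.
Proof.
move=> AB; apply/matrixP => i j; rewrite !mxE inE.
by case: (boolP (j \in A)) => [/(disjointFr AB) ->|_] /=; lra.
Qed.

End IndicatorVectors.

Section BrokenCircuitPairs.
Variables (R : realType) (n : nat).
Implicit Types (X Y Z A B H : {set 'I_n}) (C D : {set {set 'I_n}}).

(* The binary code is additive on disjoint unions and positive on nonempty
   sets, so a disjoint union has a larger code than each of its parts. *)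
Lemma hcode_setU A B : [disjoint A & B] -> hcode (A :|: B) = (hcode A + hcode B)%N.
Proof.
by move=> AB; rewrite /hcode -bigU //; apply: eq_bigl => j; rewrite !inE.
Qed.

Lemma hcode_gt0 A : A != set0 -> (0 < hcode A)%N.
Proof. by case/set0Pn => j jA; rewrite /hcode (bigD1 j) //= ltn_addr // expn_gt0. Qed.

Lemma setU_distinct A B : A != set0 -> B != set0 -> [disjoint A & B] ->
  [/\ A :|: B != A, A :|: B != B & A != B].
Proof.
move=> /set0Pn[j jA] /set0Pn[k kB] AB; split; apply/eqP.
- by move=> /setP/(_ k); rewrite !inE kB orbT (disjointFl AB kB).
- by move=> /setP/(_ j); rewrite !inE jA (disjointFr AB jA).
- by move=> /setP/(_ j); rewrite jA (disjointFr AB jA).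
Qed.

Lemma circuit_disjoint_union A B : A != set0 -> B != set0 -> [disjoint A & B] ->
  hcircuit R [set A :|: B; A; B].
Proof.
move=> hA hB AB; have [UA UB AneB] := setU_distinct hA hB AB.
have hyps_C : [set A :|: B; A; B] \subset hyps n.
  apply/subsetP => X; rewrite !inE -orbA => /or3P[] /eqP->; rewrite // setU_eq0.
  by rewrite negb_and hA.
apply/and3P; split => //.
  rewrite /hdependent (perm_free (perm_map _ (enum_set3 UA UB AneB))) /= free_cons.
  by rewrite chi_setU // memvD // memv_span ?inE ?eqxx ?orbT.
apply/forallP => D; apply/implyP => DC; apply: independent_small.
  exact: subset_trans (proper_sub DC) hyps_C.
by rewrite -ltnS -(card_set3 UA UB AneB) proper_card.
Qed.

(* Removing its largest element A u B makes {A, B} a broken circuit. *)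
Lemma broken_disjoint_pair A B : A != set0 -> B != set0 -> [disjoint A & B] ->
  hbroken R [set A; B].
Proof.
move=> hA hB AB; have [UA UB _] := setU_distinct hA hB AB.
apply/existsP; exists [set A :|: B; A; B]; rewrite circuit_disjoint_union //=.
apply/existsP; exists (A :|: B); rewrite !inE eqxx setD1_set3 // eqxx andbT /=.
apply/forallP => H; apply/implyP; rewrite !inE -orbA => /or3P[] /eqP->;
  by rewrite ?hcode_setU ?leq_addr ?leq_addl.
Qed.

(* In a three-element circuit, the two elements below the largest one are
   disjoint (the largest is their union). *)
Lemma circuit_triple_max H A B : hcircuit R [set H; A; B] ->
  H != A -> H != B -> A != B ->
  (hcode A <= hcode H)%N -> (hcode B <= hcode H)%N -> [disjoint A & B].
Proof.
move=> hC HA HB AB maxA maxB; case/and3P: (hC) => /subsetP hyps_C hdep _.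
have ne X : X \in [set H; A; B] -> X != set0 by move/hyps_C; rewrite inE.
have hH : H != set0 by apply: ne; rewrite !inE eqxx.
have hA : A != set0 by apply: ne; rewrite !inE eqxx orbT.
have hB : B != set0 by apply: ne; rewrite !inE eqxx orbT.
have [a [b E]] := dependent_set3 hH hA hB HA HB AB hdep.
case/or3P: (indicator_comb_union (chi_comb E) hH hA hB HA HB AB)
  => /andP[disj /eqP EU] //.
- by move: maxA; rewrite EU hcode_setU //; have := hcode_gt0 hB; lia.
- by move: maxB; rewrite EU hcode_setU //; have := hcode_gt0 hA; lia.
Qed.

(* A broken circuit contained in {A, B} is {A, B} itself, obtained from a
   circuit {H, A, B} with H largest; thus A and B are disjoint. *)
Lemma broken_in_pair A B D : A != B -> hbroken R D -> D \subset [set A; B] ->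
  [disjoint A & B].
Proof.
move=> AB /existsP[C /andP[hC /existsP[H /andP[HC /andP[/forallP maxH /eqP ED]]]]] sub.
have ED2 : D = [set A; B].
  apply/eqP; rewrite eqEcard sub cards2 AB ED /=.
  by have := circuit_card hC; rewrite (cardsD1 H C) HC.
have notH X : X \in [set A; B] -> H != X.
  by rewrite -ED2 ED !inE eq_sym => /andP[].
have [HA HB] := (notH A (set21 A B), notH B (set22 A B)).
have EC : C = [set H; A; B].
  by rewrite -(setD1K HC) -ED ED2; apply/setP => X; rewrite !inE orbA.
rewrite EC in hC maxH; apply: circuit_triple_max hC HA HB AB _ _;
  by apply: (implyP (maxH _)); rewrite !inE eqxx ?orbT.
Qed.

Lemma face_pair A B : A != B -> bc_face R [set A; B] = (A :&: B != set0).
Proof.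
move=> AB; apply/idP/idP.
  case/andP => /subsetP hyps_AB /forallP noB; rewrite setI_eq0; apply/negP => disj.
  have ne X : X \in [set A; B] -> X != set0 by move/hyps_AB; rewrite inE.
  by have := noB [set A; B]; rewrite broken_disjoint_pair ?subxx ?ne ?set21 ?set22.
move=> meet; apply/andP; split.
  apply/subsetP => X; rewrite !inE => /orP[] /eqP->;
  by apply: contraNneq meet => ->; rewrite ?set0I ?setI0.
apply/forallP => D; apply/implyP => hD; apply/negP => sub.
by move: meet; rewrite setI_eq0 (broken_in_pair AB hD sub).
Qed.

End BrokenCircuitPairs.

Section PairCounting.
Variable T : finType.

Lemma set2_eq (u v x y : T) : u != v ->
  ([set u; v] == [set x; y]) = ((u, v) == (x, y)) || ((u, v) == (y, x)).
Proof.
move=> uv; apply/eqP/idP => [E|]; last first.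
  by case/orP => /eqP[-> ->] //; rewrite setUC.
move: uv; have := set21 u v; have := set22 u v; rewrite E.
by case/set2P => -> /set2P[] ->; rewrite ?eqxx ?orbT.
Qed.

Lemma card_ordered_pairs (r : rel T) : symmetric r ->
  #|[set p : T * T | (p.1 != p.2) && r p.1 p.2]| =
  (2 * #|[set S : {set T} |
           [exists p : T * T, [&& p.1 != p.2, r p.1 p.2 & S == [set p.1; p.2]]]]|)%N.
Proof.
move=> r_sym; rewrite -sum1_card.
rewrite (partition_big (fun p : T * T => [set p.1; p.2])
  [in [set S : {set T} | [exists p : T * T,
     [&& p.1 != p.2, r p.1 p.2 & S == [set p.1; p.2]]]]]) /=; last first.
  by move=> p; rewrite !inE => /andP[p12 rp]; apply/existsP; exists p; rewrite p12 rp /=.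
rewrite mulnC -sum_nat_const; apply: eq_bigr => S.
rewrite inE => /existsP[[x y] /and3P[/= xy rxy /eqP->]].
rewrite sum1_card; transitivity #|[set (x, y); (y, x)]|; last first.
  by rewrite cards2 xpair_eqE negb_and xy.
apply: eq_card => -[u v]; rewrite unfold_in !inE /=.
have [->|uv] /= := eqVneq u v.
  apply/esym/negP; rewrite !xpair_eqE => /orP[] /andP[/eqP vx /eqP vy];
  by rewrite -vx -vy eqxx in xy.
rewrite set2_eq //; apply/andP/idP => [[_ //]|E]; split=> //.
by case/orP: E => /eqP[-> ->] //; rewrite r_sym.
Qed.

Lemma card_subsets : #|{set T}| = (2 ^ #|T|)%N.
Proof. by have := card_powerset [set: T]; rewrite powersetT !cardsT. Qed.

(* Disjoint pairs (A, B) correspond to maps T -> {in A, in B, in neither}. *)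
Lemma card_disjoint_pairs :
  #|[set p : {set T} * {set T} | [disjoint p.1 & p.2]]| = (3 ^ #|T|)%N.
Proof.
pose pair_of (f : {ffun T -> option bool}) :=
  ([set i | f i == Some true], [set i | f i == Some false]).
have pair_inj : injective pair_of.
  move=> f g [/setP Et /setP Ef]; apply/ffunP => i.
  by move: (Et i) (Ef i); rewrite !inE; case: (f i) (g i) => [[]|] [[]|].
have -> : [set p : {set T} * {set T} | [disjoint p.1 & p.2]] = pair_of @: setT.
  apply/setP => -[A B]; rewrite !inE /=; apply/idP/imsetP => [AB|[f _ [-> ->]]].
    exists [ffun i => if i \in A then Some true
                      else if i \in B then Some false else None]; first by [].
    congr pair; apply/setP => i; rewrite !inE ffunE.
      by case: (i \in A); case: (i \in B).
    by case: (boolP (i \in A)) => [/(disjointFr AB)->|]; case: (i \in B).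
  by apply/pred0P => i /=; rewrite !inE; case: (f i) => [[]|].
by rewrite card_imset // cardsT card_ffun card_option card_bool.
Qed.

Lemma card_meeting_pairs :
  (#|[set p : {set T} * {set T} | p.1 :&: p.2 != set0]| + 3 ^ #|T| = 4 ^ #|T|)%N.
Proof.
rewrite -card_disjoint_pairs -[4%N]/(2 * 2)%N expnMn -card_subsets -card_prod.
rewrite -(cardsC [set p : {set T} * {set T} | p.1 :&: p.2 != set0]); congr (_ + _)%N.
by apply: eq_card => p; rewrite !inE negbK setI_eq0.
Qed.

(* The diagonal pairs (A, A) that meet are those with A nonempty. *)
Lemma card_distinct_meeting_pairs :
  (#|[set p : {set T} * {set T} | (p.1 != p.2) && (p.1 :&: p.2 != set0)]| + 2 ^ #|T|
   = #|[set p : {set T} * {set T} | p.1 :&: p.2 != set0]| + 1)%N.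
Proof.
set M := [set p : {set T} * {set T} | p.1 :&: p.2 != set0].
have diagE : M :&: [set p | p.1 == p.2] = [set (A, A) | A in [set~ set0]].
  apply/setP => -[A B]; rewrite !inE /=; apply/andP/imsetP => [[meet /eqP AB]|].
    by subst B; rewrite setIid in meet; exists A; rewrite ?in_setC1.
  by case=> C; rewrite !inE => hC [-> ->]; rewrite setIid hC.
have card_diag : (#|M :&: [set p | p.1 == p.2]| + 1 = 2 ^ #|T|)%N.
  rewrite diagE card_imset ?cardsC1 ?card_subsets ?addn1 ?prednK ?expn_gt0 //.
  by move=> A B [].
have nondiag : #|M :\: [set p | p.1 == p.2]| =
    #|[set p : {set T} * {set T} | (p.1 != p.2) && (p.1 :&: p.2 != set0)]|.
  by apply: eq_card => p; rewrite !inE andbC.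
by rewrite -card_diag -(cardsID [set p | p.1 == p.2] M) nondiag; lia.
Qed.

End PairCounting.

Lemma two_faces_as_pairs (R : realType) (n : nat) :
  [set S : {set {set 'I_n}} | bc_face R S && (#|S| == 2)] =
  [set S | [exists p : {set 'I_n} * {set 'I_n},
             [&& p.1 != p.2, p.1 :&: p.2 != set0 & S == [set p.1; p.2]]]].
Proof.
apply/setP => S; rewrite !inE; apply/andP/existsP.
  case=> face /cards2P[A [B [AB ES]]]; rewrite ES face_pair // in face.
  by exists (A, B); rewrite /= AB face ES eqxx.
by case=> -[A B] /and3P[/= AB meet /eqP->]; rewrite face_pair // cards2 AB.
Qed.

(* Closed forms of S(m+1, k) for k <= 4, written without subtraction. *)
Lemma stirling2_1 m : stirling2 m.+1 1 = 1%N.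
Proof.
by elim: m => // m IH; rewrite [stirling2 _ _]/= -/(stirling2 m.+1 1) IH; case: m {IH}.
Qed.

Lemma stirling2_2 m : (stirling2 m.+1 2 + 1 = 2 ^ m)%N.
Proof.
elim: m => // m IH.
rewrite [stirling2 _ _]/= -/(stirling2 m.+1 2) -/(stirling2 m.+1 1) stirling2_1 expnS.
lia.
Qed.

Lemma stirling2_3 m : (2 * stirling2 m.+1 3 + 2 ^ m.+1 = 3 ^ m + 1)%N.
Proof.
elim: m => // m IH; rewrite [stirling2 _ _]/= -/(stirling2 m.+1 3) -/(stirling2 m.+1 2).
by have := stirling2_2 m; rewrite !expnS in IH *; lia.
Qed.

Lemma stirling2_4 m : (6 * stirling2 m.+1 4 + 3 ^ m.+1 + 1 = 4 ^ m + 3 * 2 ^ m)%N.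
Proof.
elim: m => // m IH; rewrite [stirling2 _ _]/= -/(stirling2 m.+1 4) -/(stirling2 m.+1 3).
by have := stirling2_3 m; rewrite !expnS in IH *; lia.
Qed.

Theorem proposition6p1 (R : realType) (n : nat) :
  (1 <= n)%N ->
  f1_BC R n = (2 * stirling2 n.+1 3 + 3 * stirling2 n.+1 4)%N.
Proof.
move=> _.
have meet_sym : symmetric (fun A B : {set 'I_n} => A :&: B != set0).
  by move=> A B; rewrite setIC.
have ordered : #|[set p : {set 'I_n} * {set 'I_n} |
                   (p.1 != p.2) && (p.1 :&: p.2 != set0)]| = (2 * f1_BC R n)%N.
  by rewrite /f1_BC two_faces_as_pairs; exact: card_ordered_pairs meet_sym.
have distinct := card_distinct_meeting_pairs 'I_n.
have meeting := card_meeting_pairs 'I_n.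
have S3 := stirling2_3 n; have S4 := stirling2_4 n.
rewrite card_ord !expnS in distinct meeting S3 S4.
lia.
Qed.
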